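(* Let $n\ge 3$ and let $A$ be a real nonsingular tridiagonal $n\times n$ matrix with diagonal entries $A_{i,i}=b_i$, subdiagonal entries $A_{i+1,i}=a_i$ and superdiagonal entries $A_{i,i+1}=c_i$. Suppose $A$ is diagonally dominant by rows: $$|b_1|\ge |c_1|,\qquad |b_i|\ge |a_{i-1}|+|c_i|\ (i=2,\dots,n-1),\qquad |b_n|\ge |a_{n-1}|,$$ with strict inequality in at least one of these inequalities. Then for every integer $k$ with $1<k<n$, the solutions $\mathbf Z^L_k$ of $B^L_k\mathbf Z^L_k=\mathbf e^L$ and $\mathbf Z^R_k$ of $B^R_k\mathbf Z^R_k=\mathbf e^R$ satisfy $\max_m|(\mathbf Z^L_k)_m|\le 1$ and $\max_m|(\mathbf Z^R_k)_m|\le 1$.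
   Context: For $1\le k\le n$: $B^L_k$ is the $k\times k$ matrix whose rows $1,\dots,k-1$ are rows $1,\dots,k-1$ of $A$ restricted to columns $1,\dots,k$, and whose last row is $(0,\dots,0,1)$; $\mathbf e^L=(0,\dots,0,1)^{\mathrm T}\in\mathbb R^k$. $B^R_k$ is the $(n-k+1)\times(n-k+1)$ matrix with rows and columns indexed by $k,\dots,n$, whose row $k$ is $(1,0,\dots,0)$ and whose row $m$ ($m=k+1,\dots,n$) is row $m$ of $A$ restricted to columns $k,\dots,n$; $\mathbf e^R=(1,0,\dots,0)^{\mathrm T}\in\mathbb R^{n-k+1}$. The paper calls its dichotomy algorithm ''stable'' exactly when these bounds hold for the vectors it uses. *)

From HB Require Import structures.
From mathcomp Require Import all_boot all_order all_algebra.
Set Implicit Arguments. Unset Strict Implicit. Unset Printing Implicit Defensive.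
Import Order.TTheory GRing.Theory Num.Theory.
Local Open Scope ring_scope.

(* Entry of an n x n matrix at 0-based natural indices (0 outside range). *)
Definition Aat (R : ringType) (n : nat) (A : 'M[R]_n) (i j : nat) : R :=
  match @insub nat (fun x => (x < n)%N) 'I_n i, @insub nat (fun x => (x < n)%N) 'I_n j with
  | Some i', Some j' => A i' j'
  | _, _ => 0
  end.

Definition tridiagonal (R : ringType) (n : nat) (A : 'M[R]_n) : Prop :=
  forall i j : 'I_n, (i.+1 < j)%N || (j.+1 < i)%N -> A i j = 0.

Definition row_diag_dominant (R : numDomainType) (n : nat) (A : 'M[R]_n) : Prop :=
  forall i : 'I_n, \sum_(j < n | j != i) `|A i j| <= `|A i i|.

Definition some_row_strict (R : numDomainType) (n : nat) (A : 'M[R]_n) : Prop :=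
  exists i : 'I_n, \sum_(j < n | j != i) `|A i j| < `|A i i|.

(* k is 1-based as in the paper.
   B^L_k (k x k): rows 1..k-1 = rows 1..k-1 of A on columns 1..k; last row (0,..,0,1).
   In 0-based local indices: row i < k-1 is A i j, row k-1 is e_{k-1}. *)
Definition BL (R : ringType) (n : nat) (A : 'M[R]_n) (k : nat) : 'M[R]_k :=
  \matrix_(i < k, j < k)
    if (i < k.-1)%N then Aat A i j else (if j == k.-1 :> nat then 1 else 0).

Definition eL (R : ringType) (k : nat) : 'cV[R]_k :=
  \col_(i < k) (if i == k.-1 :> nat then 1 else 0).

(* B^R_k ((n-k+1) x (n-k+1)), rows/columns indexed k..n (1-based), i.e.
   local index i <-> global 0-based index (k-1)+i. First row (1,0,..,0);
   row m (m = k+1..n) = row m of A restricted to columns k..n. *)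
Definition BR (R : ringType) (n : nat) (A : 'M[R]_n) (k : nat) : 'M[R]_(n - k + 1) :=
  \matrix_(i < n - k + 1, j < n - k + 1)
    if i == 0 :> nat then (if j == 0 :> nat then 1 else 0)
    else Aat A (k.-1 + i) (k.-1 + j).

Definition eR (R : ringType) (m : nat) : 'cV[R]_m :=
  \col_(i < m) (if i == 0 :> nat then 1 else 0).

(* Both systems live on a window of consecutive indices of [A] in which one row
   is replaced by a unit row, the pivot.  Padding a solution [Z] by zeros gives
   a vector [x] with [(A x)_j = 0] at every non-pivot row where [x_j] can be
   nonzero, and [x_p = c] at the pivot.  A maximum principle for nonsingular,
   weakly row-dominant matrices then bounds [|x|] by [|c|]: on the rows where
   [|x|] is maximal, equality in the dominance inequality shows that [A] has no
   entry leaving these rows, so the corresponding principal block of [A] is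
   invertible and kills [x] there.  Taking [c = 0] yields nonsingularity of the
   window matrix, [c = 1] the bound. *)

From HB Require Import structures.
From mathcomp Require Import all_boot all_order all_algebra zify.
Import Order.TTheory GRing.Theory Num.Theory.
Local Open Scope ring_scope.

Set Implicit Arguments. Unset Strict Implicit. Unset Printing Implicit Defensive.

Lemma unitmx_of_ker_eq0 (F : fieldType) m (M : 'M[F]_m) :
  (forall Z : 'cV[F]_m, M *m Z = 0 -> Z = 0) -> M \in unitmx.
Proof.
move=> Mker; rewrite -unitmx_tr -row_free_unit; apply: inj_row_free => v vM0.
have /Mker : M *m v^T = 0 by rewrite -[M]trmxK -trmx_mul vM0 trmx0.
by move/(congr1 trmx); rewrite trmxK trmx0.
Qed.

Section InvariantBlock.

Variables (F : fieldType) (n : nat) (S : {set 'I_n}).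

Lemma sum_supported_enum_val (G : 'I_n -> F) :
  (forall s, s \notin S -> G s = 0) -> \sum_s G s = \sum_(t < #|S|) G (enum_val t).
Proof.
move=> G0; rewrite (bigID (mem S)) /= [X in _ + X]big1 ?addr0 //.
exact: big_enum_val.
Qed.

Lemma invariant_block_kernel_eq0 (A : 'M[F]_n) (x : 'cV[F]_n) :
  A \in unitmx -> (forall i j, i \in S -> j \notin S -> A i j = 0) ->
  (forall j, j \notin S -> x j 0 = 0) ->
  (forall i, i \in S -> (A *m x) i 0 = 0) -> x = 0.
Proof.
move=> A_unit A_block x_supp Ax_S.
pose e : 'I_#|S| -> 'I_n := enum_val.
have AS_inv : mxsub e e A *m mxsub e e (invmx A) = 1%:M.
  apply/matrixP => i j; rewrite !mxE.
  under eq_bigr do rewrite !mxE.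
  rewrite -(@sum_supported_enum_val (fun s => A (e i) s * invmx A s (e j))); last first.
    by move=> s s_out; rewrite A_block ?mul0r //; apply: enum_valP.
  have := congr1 (fun M : 'M[F]_n => M (e i) (e j)) (mulmxV A_unit).
  by rewrite !mxE => ->; rewrite (inj_eq enum_val_inj).
have ASx0 : mxsub e e A *m rowsub e x = 0.
  apply/matrixP => i j; rewrite !mxE (ord1 j).
  under eq_bigr do rewrite !mxE.
  rewrite -(@sum_supported_enum_val (fun s => A (e i) s * x s 0)); last first.
    by move=> s s_out; rewrite x_supp ?mulr0.
  by have := Ax_S _ (enum_valP i); rewrite mxE.
have xS0 : rowsub e x = 0.
  by rewrite -[rowsub e x]mul1mx -(mulmx1C AS_inv) -mulmxA ASx0 mulmx0.
apply/matrixP => j k; rewrite (ord1 k) mxE.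
case: (boolP (j \in S)) => [j_in|]; last exact: x_supp.
have := congr1 (fun M : 'cV[F]_#|S| => M (enum_rank_in j_in j) 0) xS0.
by rewrite !mxE /e enum_rankK_in.
Qed.

End InvariantBlock.

Section MaximumPrinciple.

Variables (R : realFieldType) (n : nat) (A : 'M[R]_n).

(* Equality throughout the chain
   [|A i i| M = |sum_(j != i) A i j x j| <= sum_(j != i) |A i j| |x j|
              <= sum_(j != i) |A i j| M <= |A i i| M]
   forces [|x j| = M] wherever [A i j != 0]. *)
Lemma dominant_row_norm_eq (x : 'cV[R]_n) (i : 'I_n) :
  \sum_(j < n | j != i) `|A i j| <= `|A i i| ->
  (A *m x) i 0 = 0 -> (forall j, `|x j 0| <= `|x i 0|) ->
  forall j, A i j != 0 -> `|x j 0| = `|x i 0|.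
Proof.
move=> i_dom Ax_i x_max j Aij_neq0.
have [-> //|j_neq_i] := eqVneq j i.
set M := `|x i 0|.
have diag_eq : A i i * x i 0 = - \sum_(j < n | j != i) A i j * x j 0.
  by apply/eqP; rewrite -subr_eq0 opprK; apply/eqP; move: Ax_i; rewrite mxE (bigD1 i).
have lower : `|A i i| * M <= \sum_(j < n | j != i) `|A i j| * `|x j 0|.
  rewrite /M -normrM diag_eq normrN; apply: le_trans (ler_norm_sum _ _ _) _.
  by under eq_bigr do rewrite normrM.
have upper : \sum_(j < n | j != i) `|A i j| * M <= `|A i i| * M.
  by rewrite -mulr_suml; apply: ler_wpM2r; rewrite ?normr_ge0.
have gap_ge0 (l : 'I_n) : l != i -> 0 <= `|A i l| * (M - `|x l 0|).
  by move=> _; rewrite mulr_ge0 // subr_ge0.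
have gap_sum0 : \sum_(l < n | l != i) `|A i l| * (M - `|x l 0|) = 0.
  apply/eqP; rewrite eq_le sumr_ge0 // andbT.
  under eq_bigr do rewrite mulrBr.
  by rewrite sumrB subr_le0 (le_trans upper lower).
have /eqP := psumr_eq0P gap_ge0 gap_sum0 j_neq_i.
by rewrite mulf_eq0 normr_eq0 (negbTE Aij_neq0) /= subr_eq0 => /eqP <-.
Qed.

Hypotheses (A_unit : A \in unitmx) (A_dom : row_diag_dominant A).

Lemma dominant_max_principle (x : 'cV[R]_n) (p : 'I_n) :
  (forall j, j != p -> x j 0 = 0 \/ (A *m x) j 0 = 0) ->
  forall j, `|x j 0| <= `|x p 0|.
Proof.
move=> x_eq.
have [im _ im_max] := @arg_maxP _ _ _ p predT (fun j => `|x j 0|) erefl.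
move=> j; apply: le_trans (im_max j isT) _; rewrite leNgt; apply/negP => p_lt.
set M := `|x im 0| in im_max p_lt.
have M_gt0 : 0 < M by apply: le_lt_trans p_lt.
pose S := [set j | `|x j 0| == M].
have Ax_S i : i \in S -> (A *m x) i 0 = 0.
  rewrite inE => /eqP xi_eq.
  have i_neq_p : i != p by apply: contraTneq p_lt => <-; rewrite xi_eq ltxx.
  by case: (x_eq i i_neq_p) => // xi0; move: M_gt0; rewrite -xi_eq xi0 normr0 ltxx.
have A_block i l : i \in S -> l \notin S -> A i l = 0.
  move=> i_in; apply: contraNeq => Ail_neq0; move: (i_in); rewrite !inE => /eqP xi_eq.
  have x_max l' : `|x l' 0| <= `|x i 0| by rewrite xi_eq; exact: im_max.
  by rewrite (dominant_row_norm_eq (A_dom i) (Ax_S i i_in) x_max Ail_neq0) xi_eq.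
pose xS := \col_(j < n) (if j \in S then x j 0 else 0).
have xS0 : xS = 0.
  apply: (invariant_block_kernel_eq0 A_unit A_block) => [l l_out|i i_in].
    by rewrite mxE (negbTE l_out).
  rewrite -(Ax_S i i_in) !mxE; apply: eq_bigr => l _; rewrite mxE.
  by case: ifPn => // l_out; rewrite A_block // !mul0r.
have := congr1 (fun y : 'cV[R]_n => y im 0) xS0.
by rewrite !mxE inE eqxx => xim0; move: M_gt0; rewrite /M xim0 normr0 ltxx.
Qed.

End MaximumPrinciple.

Lemma AatE (R : nzRingType) n (A : 'M[R]_n) (i j : 'I_n) : Aat A i j = A i j.
Proof.
rewrite /Aat; case: insubP => [i' _ i'_eq|]; last by rewrite ltn_ord.
case: insubP => [j' _ j'_eq|]; last by rewrite ltn_ord.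
by congr (A _ _); apply: val_inj.
Qed.

Definition cVat (R : nzRingType) m (Z : 'cV[R]_m) (j : nat) : R :=
  if @insub nat (fun x => (x < m)%N) 'I_m j is Some j' then Z j' 0 else 0.

Lemma cVatE (R : nzRingType) m (Z : 'cV[R]_m) (j : 'I_m) : cVat Z j = Z j 0.
Proof.
rewrite /cVat; case: insubP => [j' _ j'_eq|]; last by rewrite ltn_ord.
by congr (Z _ _); apply: val_inj.
Qed.

Lemma cVat_out (R : nzRingType) m (Z : 'cV[R]_m) (j : nat) : (m <= j)%N -> cVat Z j = 0.
Proof. by move=> m_le_j; rewrite /cVat insubN // -leqNgt. Qed.

Lemma sum_window (V : nmodType) (G : nat -> V) a m n : (a + m <= n)%N ->
  (forall j, (j < a)%N || (a + m <= j)%N -> G j = 0) ->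
  \sum_(j < n) G j = \sum_(j < m) G (a + j)%N.
Proof.
move=> am_le_n G_out.
have G0 (l r : nat) : (forall j, (l <= j < r)%N -> (j < a)%N || (a + m <= j)%N) ->
    \sum_(l <= j < r) G j = 0.
  by move=> lr_out; rewrite big_nat_cond big1 // => j /andP[/lr_out/G_out].
have left0 : \sum_(0 <= j < a) G j = 0 by apply: G0 => j /andP[_ ->].
have right0 : \sum_(a + m <= j < n) G j = 0.
  by apply: G0 => j /andP[-> _]; rewrite orbT.
rewrite -(big_mkord xpredT) (big_cat_nat (leq0n a) (leq_trans (leq_addr m a) am_le_n)) /=.
rewrite (big_cat_nat (leq_addr m a) am_le_n) /= left0 right0 add0r addr0.
rewrite -{1}[a]add0n big_addn addKn big_mkord.
by apply: eq_bigr => j _; rewrite addnC.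
Qed.

Section Window.

Variables (R : realFieldType) (n : nat) (A : 'M[R]_n).
Hypotheses (A_unit : A \in unitmx) (A_dom : row_diag_dominant A).
Variables (a m : nat) (q : 'I_m) (B : 'M[R]_m).
Hypothesis window : (a + m <= n)%N.
Hypothesis B_rows : forall i j : 'I_m, i != q -> B i j = Aat A (a + i)%N (a + j)%N.
Hypothesis B_pivot : forall j : 'I_m, B q j = (j == q)%:R.

Definition pad_entry (Z : 'cV[R]_m) (j : nat) : R :=
  if (a <= j)%N then cVat Z (j - a) else 0.

Definition pad_window (Z : 'cV[R]_m) : 'cV[R]_n := \col_(j < n) pad_entry Z j.

Lemma pad_entry_in (Z : 'cV[R]_m) (i : 'I_m) : pad_entry Z (a + i)%N = Z i 0.
Proof. by rewrite /pad_entry leq_addr addKn cVatE. Qed.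

Lemma pad_entry_out (Z : 'cV[R]_m) (j : nat) :
  (j < a)%N || (a + m <= j)%N -> pad_entry Z j = 0.
Proof.
rewrite /pad_entry; case: ifPn => //= a_le_j /orP[|am_le_j].
  by rewrite ltnNge a_le_j.
by rewrite cVat_out // leq_subRL.
Qed.

Lemma mulmx_pad_window (Z : 'cV[R]_m) (g : 'I_n) :
  (A *m pad_window Z) g 0 = \sum_(j < m) Aat A g (a + j)%N * Z j 0.
Proof.
rewrite mxE (eq_bigr (fun j : 'I_n => Aat A g j * pad_entry Z j)); last first.
  by move=> j _; rewrite AatE mxE.
rewrite (sum_window (G := fun j => Aat A g j * pad_entry Z j) window).
  by apply: eq_bigr => j _; rewrite pad_entry_in.
by move=> j /pad_entry_out ->; rewrite mulr0.
Qed.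

Lemma window_solution_bounded (c : R) (Z : 'cV[R]_m) :
  B *m Z = c *: delta_mx q 0 -> forall i, `|Z i 0| <= `|c|.
Proof.
move=> BZ.
have BZ_row i : \sum_(j < m) B i j * Z j 0 = c * (i == q)%:R.
  by have := congr1 (fun M : 'cV[R]_m => M i 0) BZ; rewrite !mxE andbT.
have aq_lt_n : (a + q < n)%N by have := ltn_ord q; lia.
pose p : 'I_n := Ordinal aq_lt_n.
have pad_p : pad_window Z p 0 = c.
  rewrite mxE pad_entry_in; have := BZ_row q; rewrite eqxx mulr1 => <-.
  rewrite (bigD1 q) //= B_pivot eqxx mul1r big1 ?addr0 // => j j_neq_q.
  by rewrite B_pivot (negbTE j_neq_q) mul0r.
have pad_eq (j : 'I_n) : j != p -> pad_window Z j 0 = 0 \/ (A *m pad_window Z) j 0 = 0.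
  move=> j_neq_p.
  have [j_out | j_in] := boolP ((j < a)%N || (a + m <= j)%N).
    by left; rewrite mxE pad_entry_out.
  have ja_lt_m : (j - a < m)%N by lia.
  pose i : 'I_m := Ordinal ja_lt_m.
  have j_eq : (j : nat) = (a + i)%N by rewrite /=; lia.
  have i_neq_q : i != q.
    by apply: contraNneq j_neq_p => i_eq_q; apply/eqP/val_inj; rewrite /= j_eq i_eq_q.
  right; rewrite mulmx_pad_window j_eq.
  have := BZ_row i; rewrite (negbTE i_neq_q) mulr0 => BZ_i.
  by apply: etrans BZ_i; apply: eq_bigr => l _; rewrite B_rows.
move=> i; have ai_lt_n : (a + i < n)%N by have := ltn_ord i; lia.
have := dominant_max_principle A_unit A_dom pad_eq (Ordinal ai_lt_n).
by rewrite pad_p mxE pad_entry_in.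
Qed.

Lemma window_unitmx : B \in unitmx.
Proof.
apply: unitmx_of_ker_eq0 => Z BZ0; apply/matrixP => i j; rewrite (ord1 j) mxE.
apply/eqP; rewrite -normr_le0 -(normr0 R).
by apply: (window_solution_bounded (c := 0)); rewrite BZ0 scale0r.
Qed.

End Window.

Section PivotedBlocks.

Variables (R : realFieldType) (n : nat) (A : 'M[R]_n) (k : nat).

Lemma BL_rows (hk : (k.-1 < k)%N) :
  forall i j : 'I_k, i != Ordinal hk -> BL A k i j = Aat A (0 + i)%N (0 + j)%N.
Proof.
move=> i j i_neq; rewrite mxE ifT //.
have : (i : nat) != k.-1 by [].
by have := ltn_ord i; lia.
Qed.

Lemma BL_pivot (hk : (k.-1 < k)%N) (j : 'I_k) : BL A k (Ordinal hk) j = (j == Ordinal hk)%:R.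
Proof. by rewrite mxE ltnn -[_ == k.-1]/(j == Ordinal hk); case: (j == _). Qed.

Lemma eL_delta (hk : (k.-1 < k)%N) : eL R k = delta_mx (Ordinal hk) 0.
Proof.
apply/matrixP => i j; rewrite !mxE (ord1 j) eqxx andbT.
by rewrite -[_ == k.-1]/(i == Ordinal hk); case: (i == _).
Qed.

Lemma BR_rows (hk : (0 < n - k + 1)%N) :
  forall i j : 'I_(n - k + 1),
    i != Ordinal hk -> BR A k i j = Aat A (k.-1 + i)%N (k.-1 + j)%N.
Proof. by move=> i j i_neq; rewrite mxE ifF //; apply/negbTE. Qed.

Lemma BR_pivot (hk : (0 < n - k + 1)%N) (j : 'I_(n - k + 1)) :
  BR A k (Ordinal hk) j = (j == Ordinal hk)%:R.
Proof. by rewrite mxE /= -[_ == 0%N]/(j == Ordinal hk); case: (j == _). Qed.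

Lemma eR_delta (hk : (0 < n - k + 1)%N) : eR R (n - k + 1) = delta_mx (Ordinal hk) 0.
Proof.
apply/matrixP => i j; rewrite !mxE (ord1 j) eqxx andbT.
by rewrite -[_ == 0%N]/(i == Ordinal hk); case: (i == _).
Qed.

End PivotedBlocks.

Theorem theorem4 (R : realFieldType) (n : nat) (A : 'M[R]_n) :
  (3 <= n)%N ->
  A \in unitmx ->
  tridiagonal A ->
  row_diag_dominant A ->
  some_row_strict A ->
  forall k : nat, (1 < k)%N -> (k < n)%N ->
    [/\ BL A k \in unitmx,
        BR A k \in unitmx,
        (forall Z : 'cV[R]_k, BL A k *m Z = eL R k ->
           forall m : 'I_k, `|Z m 0| <= 1)
      & (forall Z : 'cV[R]_(n - k + 1), BR A k *m Z = eR R (n - k + 1) ->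
           forall m : 'I_(n - k + 1), `|Z m 0| <= 1)].
Proof.
move=> _ A_unit _ A_dom _ k k_gt1 k_lt_n.
have hL : (k.-1 < k)%N by lia.
have hR : (0 < n - k + 1)%N by lia.
have L_window : (0 + k <= n)%N by lia.
have R_window : (k.-1 + (n - k + 1) <= n)%N by lia.
have BL_unit := window_unitmx A_unit A_dom L_window (@BL_rows _ _ A _ hL) (BL_pivot A hL).
have BR_unit := window_unitmx A_unit A_dom R_window (@BR_rows _ _ A _ hR) (BR_pivot A hR).
have BL_bounded :=
  window_solution_bounded A_unit A_dom L_window (@BL_rows _ _ A _ hL) (BL_pivot A hL).
have BR_bounded :=
  window_solution_bounded A_unit A_dom R_window (@BR_rows _ _ A _ hR) (BR_pivot A hR).
split=> // Z.
- rewrite (eL_delta R hL) -(normr1 R) -[delta_mx _ _]scale1r.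
  exact: BL_bounded.
- rewrite (eR_delta R hR) -(normr1 R) -[delta_mx _ _]scale1r.
  exact: BR_bounded.
Qed.
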